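(* For every integer $m\geq 1$, \[ \begin{pmatrix}\delta^s_2\big((s_1^2+s_2^2)^m\big)\\ -\delta^s_1\big((s_1^2+s_2^2)^m\big)\end{pmatrix}\in \mathrm{Vect}(\mathbb{C}^s_{\langle 2\rangle}\,|\,\tau), \] where $s_1,s_2$, $\tau$, $\delta^s$ and $\mathrm{Vect}(\mathbb{C}^s_{\langle 2\rangle}|\tau)$ are as in the context with $n=2$.
   Context: Let $n\geq 1$ (here $n=2$), let $\{e_1,\dots,e_n\}$ be an orthonormal basis of $\mathbb{C}^n$ and $\{f_1,\dots,f_n\}$ the standard basis of $\mathbb{C}^n$. The full Fock space is $\mathcal{F}(\mathbb{C}^n)=\mathbb{C}1\oplus\bigoplus_{k\geq1}(\mathbb{C}^n)^{\otimes k}$ with vacuum vector $1$. For a word $w=i_1\cdots i_k$ over the alphabet $[n]=\{1,\dots,n\}$ put $e_w=e_{i_1}\otimes\cdots\otimes e_{i_k}$ (and $e_\epsilon=1$ for the empty word). Let $l_j$ be the left creation operator $l_je_w=e_{jw}$, and $s_j=l_j+l_j^*$ ($j=1,\dots,n$); these form a free semicircular system with respect to the vacuum state $\tau(x)=\langle x1,1\rangle$. Let $\mathbb{C}^s_{\langle n\rangle}$ be the unital algebra generated by $s_1,\dots,s_n$. The cyclic gradient $\delta^s=(\delta^s_1,\dots,\delta^s_n):\mathbb{C}^s_{\langle n\rangle}\to(\mathbb{C}^s_{\langle n\rangle})^n$ is the linear map with $\delta^s(s_{i_1}\cdots s_{i_p})=\sum_{j=1}^p s_{i_{j+1}}\cdots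 s_{i_p}s_{i_1}\cdots s_{i_{j-1}}\otimes f_{i_j}$ (identifying $(\mathbb{C}^s_{\langle n\rangle})^n\cong \mathbb{C}^s_{\langle n\rangle}\otimes\mathbb{C}^n$), i.e. $\delta^s_j(s_{i_1}\cdots s_{i_p})=\sum_{m:\,i_m=j}s_{i_{m+1}}\cdots s_{i_p}s_{i_1}\cdots s_{i_{m-1}}$. The free divergence-free vector field is $\mathrm{Vect}(\mathbb{C}^s_{\langle n\rangle}|\tau)=\{(p_1,\dots,p_n)\in(\mathbb{C}^s_{\langle n\rangle})^n : \sum_{j=1}^n\tau(p_j\,\delta^s_j[r])=0 \text{ for all } r\in\mathbb{C}^s_{\langle n\rangle}\}$. *)

From mathcomp Require Import all_boot all_algebra.
From mathcomp Require Export complex Rstruct.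
Set Implicit Arguments. Unset Strict Implicit. Unset Printing Implicit Defensive.
Import GRing.Theory.
Local Open Scope ring_scope.

Definition CC : comRingType := Rdefinitions.R[i].

Section FreeSemicircular.
Variables (C : comRingType) (n : nat).

(* Words over the alphabet [n] = 'I_n (letter i+1 of the paper is (i : 'I_n)). *)
Definition word := seq 'I_n.

(* Vectors of the (algebraic) full Fock space: coefficient functions on words;
   e_w is the indicator of the word w, the vacuum 1 is e_epsilon. *)
Definition fock := word -> C.
Definition vac : fock := fun w => (w == [::])%:R.

(* left creation l_j e_w = e_{jw} *)
Definition lcre (j : 'I_n) (v : fock) : fock :=
  fun w => if w is i :: w' then (i == j)%:R * v w' else 0.
(* its adjoint l_j^* e_{iw} = [i = j] e_w, l_j^* 1 = 0 *)
Definition lann (j : 'I_n) (v : fock) : fock := fun w => v (j :: w).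
Definition sop (j : 'I_n) (v : fock) : fock := fun w => lcre j v w + lann j v w.

Definition word_op (w : word) (v : fock) : fock := foldr sop v w.

(* Elements of C^s_<n>: finite linear combinations  sum c * s_w  of monomials
   s_w = s_{i_1}...s_{i_k} (s_1,...,s_n are algebraically free). *)
Definition ncpoly := seq (C * word).
Definition ncadd (p q : ncpoly) : ncpoly := p ++ q.
Definition ncopp (p : ncpoly) : ncpoly := [seq (- t.1, t.2) | t <- p].
Definition ncmul (p q : ncpoly) : ncpoly :=
  [seq (a.1 * b.1, a.2 ++ b.2) | a <- p, b <- q].
Definition ncone : ncpoly := [:: (1, [::])].
Definition ncexp (p : ncpoly) (m : nat) : ncpoly := iter m (ncmul p) ncone.
Definition sgen (j : 'I_n) : ncpoly := [:: (1, [:: j])].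

(* vacuum state tau(x) = < x 1, 1 > *)
Definition tau (p : ncpoly) : C := \sum_(t <- p) t.1 * word_op t.2 vac [::].

(* cyclic gradient on a monomial:
   delta_j (s_{i_1}...s_{i_p}) = sum_{m : i_m = j} s_{i_{m+1}}...s_{i_p} s_{i_1}...s_{i_{m-1}}
   (0-based index k = m - 1) *)
Definition cyc_word (j : 'I_n) (w : word) : ncpoly :=
  [seq (1, drop k.+1 w ++ take k w) | k <- iota 0 (size w) & nth j w k == j].
Definition cycgrad (j : 'I_n) (p : ncpoly) : ncpoly :=
  flatten [seq [seq (t.1 * c.1, c.2) | c <- cyc_word j t.2] | t <- p].

Definition in_Vect (P : 'I_n -> ncpoly) : Prop :=
  forall r : ncpoly, \sum_(j < n) tau (ncmul (P j) (cycgrad j r)) = 0.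

End FreeSemicircular.

Definition idx1 : 'I_2 := ord0.
Definition idx2 : 'I_2 := ord_max.

(* The first variation dmom_v of the moments of the free semicircular law, when
   its potential is perturbed by s_v, is again tracial, and tau(s_a delta_j(s_v))
   equals dmom_v(s_j s_a) up to terms that cancel in the antisymmetrised sum
     tau(delta_i q . delta_j r) - tau(delta_j q . delta_i r)
       = sum_{c s_v in r} c dmom_v(D q),
   where D is the derivation s_i |-> s_j, s_j |-> -s_i generating the rotations
   in the (s_i, s_j)-plane.  D annihilates s_1^2 + s_2^2, hence all its powers. *)

From mathcomp Require Import all_boot all_algebra.
From mathcomp Require Import ring zify.
Set Implicit Arguments. Unset Strict Implicit. Unset Printing Implicit Defensive.
Import GRing.Theory.
Local Open Scope ring_scope.

Lemma seq_size_ind (T : Type) (P : seq T -> Prop) :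
  (forall s, (forall t, (size t < size s)%N -> P t) -> P s) -> forall s, P s.
Proof.
move=> IH; suff bounded k s : (size s <= k)%N -> P s by move=> s; apply: bounded.
elim: k s => [|k IHk] s le_sk; apply: IH => t lt_ts; [exfalso; lia | apply: IHk; lia].
Qed.

Lemma catC_of_rot1 (T X : Type) (f : seq T -> X) :
  (forall j a, f (j :: a) = f (rcons a j)) -> forall x y, f (x ++ y) = f (y ++ x).
Proof.
move=> rot1 x y; elim: x y => [|j x IH] y; first by rewrite cats0.
by rewrite cat_cons rot1 rcons_cat IH cat_rcons.
Qed.

Section Splits.
Variable n : nat.

Fixpoint splits (j : 'I_n) (a : word n) : seq (word n * word n) :=
  if a is x :: a' then
    let r := [seq (x :: ps.1, ps.2) | ps <- splits j a'] in
    if x == j then ([::], a') :: r else r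
  else [::].

Lemma splitsP j a ps : ps \in splits j a -> a = ps.1 ++ j :: ps.2.
Proof.
elim: a ps => [|x a IH] ps //=.
have in_tail : ps \in [seq (x :: qs.1, qs.2) | qs <- splits j a] ->
    x :: a = ps.1 ++ j :: ps.2 by case/mapP => qs /IH -> ->.
case: eqP => [x_j|_]; last exact: in_tail.
by rewrite inE => /predU1P [->|/in_tail //]; rewrite x_j.
Qed.

Lemma size_splits_l j a ps : ps \in splits j a -> (size ps.1 < size a)%N.
Proof. by move/splitsP => ->; rewrite size_cat /=; lia. Qed.

Lemma size_splits_r j a ps : ps \in splits j a -> (size ps.2 < size a)%N.
Proof. by move/splitsP => ->; rewrite size_cat /=; lia. Qed.

Variable R : nmodType.

Lemma big_splits_cons j x a (F : word n * word n -> R) :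
  \sum_(ps <- splits j (x :: a)) F ps =
  (if x == j then F ([::], a) else 0) + \sum_(ps <- splits j a) F (x :: ps.1, ps.2).
Proof. by rewrite /=; case: eqP => _; rewrite ?big_cons big_map ?add0r. Qed.

Lemma big_splits_cat j a b (F : word n * word n -> R) :
  \sum_(ps <- splits j (a ++ b)) F ps =
  \sum_(ps <- splits j a) F (ps.1, ps.2 ++ b) + \sum_(ps <- splits j b) F (a ++ ps.1, ps.2).
Proof.
elim: a F => [|x a IH] F /=; first by rewrite big_nil add0r; apply: eq_bigr => -[].
by rewrite big_splits_cons IH big_splits_cons addrA.
Qed.

Lemma big_splits_rcons j a x (F : word n * word n -> R) :
  \sum_(ps <- splits j (rcons a x)) F ps =
  \sum_(ps <- splits j a) F (ps.1, rcons ps.2 x) + (if x == j then F (a, [::]) else 0).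
Proof.
rewrite -cats1 big_splits_cat big_splits_cons big_nil addr0 cats0.
by under eq_bigr => ps _ do rewrite cats1.
Qed.

(* Both sides enumerate the factorisations b = x ++ i :: y ++ j :: z. *)
Lemma exchange_big_splits i j (G : word n -> word n -> word n -> R) b :
  \sum_(ps <- splits i b) \sum_(qs <- splits j ps.2) G ps.1 qs.1 qs.2 =
  \sum_(ps <- splits j b) \sum_(qs <- splits i ps.1) G qs.1 qs.2 ps.2.
Proof.
elim: b G => [|c b IH] G; first by rewrite !big_nil.
rewrite big_splits_cons (IH (fun x y z => G (c :: x) y z)) big_splits_cons.
rewrite big_nil if_same add0r.
under [in RHS]eq_bigr => ps _ do rewrite big_splits_cons.
rewrite big_split /=; congr (_ + _).
by case: eqP => _ //; rewrite big1.
Qed.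

(* Both sides enumerate the pairs of an i-position and a j-position in the
   cyclic word b. *)
Lemma exchange_big_splits_rot i j (F : word n -> word n -> R) b :
  \sum_(ps <- splits i b) \sum_(qs <- splits j (ps.2 ++ ps.1)) F qs.1 qs.2 =
  \sum_(ps <- splits j b) \sum_(qs <- splits i (ps.2 ++ ps.1)) F qs.2 qs.1.
Proof.
under eq_bigr => ps _ do rewrite big_splits_cat /=.
under [in RHS]eq_bigr => ps _ do rewrite big_splits_cat /=.
rewrite !big_split /= addrC; congr (_ + _).
- by rewrite (exchange_big_splits j i (fun p y z => F (z ++ p) y)).
- exact: (exchange_big_splits i j (fun p y z => F y (z ++ p))).
Qed.

End Splits.

Section Semicircular.
Variables (C : comNzRingType) (n : nat).
Implicit Types (a v w : word n) (i j : 'I_n).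

Definition mom w : C := word_op w (@vac C n) [::].

Lemma word_op_cons j w (f : fock C n) u :
  word_op (j :: w) f u =
  (if u is i :: u' then (i == j)%:R * word_op w f u' else 0) + word_op w f (j :: u).
Proof. by []. Qed.

Lemma mom_nil : mom [::] = 1.
Proof. by []. Qed.

Lemma word_op_vac_cons w i u :
  word_op w (@vac C n) (i :: u) =
  \sum_(ps <- splits i w) mom ps.1 * word_op ps.2 (@vac C n) u.
Proof.
elim/seq_size_ind: w i u => -[|j w] IH i u; first by rewrite big_nil.
have lt_w : (size w < size (j :: w))%N by [].
rewrite word_op_cons (IH w lt_w) big_splits_cons mom_nil mul1r eq_sym.
congr (_ + _); first by case: (j == i); rewrite ?mul1r ?mul0r.
under eq_big_seq => ps /size_splits_r lt_ps do
  rewrite (IH ps.2 (ltn_trans lt_ps lt_w)) mulr_sumr.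
under [RHS]eq_big_seq => ps /size_splits_l lt_ps do
  rewrite {1}/mom word_op_cons add0r (IH ps.1 (ltn_trans lt_ps lt_w)) mulr_suml.
rewrite (exchange_big_splits j i (fun p x y => mom p * (mom x * word_op y (@vac C n) u))).
by apply: eq_bigr => ps _; apply: eq_bigr => qs _; rewrite mulrA.
Qed.

Lemma mom_cons j a : mom (j :: a) = \sum_(ps <- splits j a) mom ps.1 * mom ps.2.
Proof. by rewrite {1}/mom word_op_cons add0r word_op_vac_cons. Qed.

Lemma mom_rcons a j : mom (rcons a j) = \sum_(ps <- splits j a) mom ps.1 * mom ps.2.
Proof.
elim/seq_size_ind: a => -[|i a] IH; first by rewrite mom_cons.
have lt_a : (size a < size (i :: a))%N by [].
rewrite rcons_cons mom_cons big_splits_rcons big_splits_cons !mom_nil mulr1 mul1r.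
rewrite eq_sym addrC; congr (_ + _).
under eq_big_seq => ps /size_splits_r lt_ps do
  rewrite (IH ps.2 (ltn_trans lt_ps lt_a)) mulr_sumr.
under [RHS]eq_bigr => ps _ do rewrite mom_cons mulr_suml.
rewrite (exchange_big_splits i j (fun p x y => mom p * (mom x * mom y))).
by apply: eq_bigr => ps _; apply: eq_bigr => qs _; rewrite mulrA.
Qed.

Lemma mom_catC x y : mom (x ++ y) = mom (y ++ x).
Proof. by apply: catC_of_rot1 => j a; rewrite mom_cons mom_rcons. Qed.

(* tau(s_a delta_j(s_v)) *)
Definition mom_cycgrad j a v : C := \sum_(ps <- splits j v) mom (a ++ ps.2 ++ ps.1).

Lemma mom_cycgrad_rcons i j a v :
  mom_cycgrad i (rcons a j) v =
  \sum_(ps <- splits i v) \sum_(qs <- splits j (ps.2 ++ ps.1)) mom qs.1 * mom (qs.2 ++ a)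
  + \sum_(ps <- splits j a) mom_cycgrad i ps.1 v * mom ps.2.
Proof.
rewrite /mom_cycgrad.
under eq_bigr => ps _ do rewrite cat_rcons mom_catC cat_cons mom_cons big_splits_cat.
rewrite big_split /=; congr (_ + _).
rewrite exchange_big; apply: eq_bigr => qs _; rewrite mulr_suml.
by apply: eq_bigr => ps _ /=; rewrite mom_catC.
Qed.

Lemma mom_cycgrad_cons i j a v :
  mom_cycgrad j (i :: a) v =
  \sum_(ps <- splits i a) mom ps.1 * mom_cycgrad j ps.2 v
  + \sum_(ps <- splits j v) \sum_(qs <- splits i (ps.2 ++ ps.1)) mom (a ++ qs.1) * mom qs.2.
Proof.
rewrite /mom_cycgrad.
under eq_bigr => ps _ do rewrite cat_cons mom_cons big_splits_cat.
rewrite big_split /=; congr (_ + _).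
by rewrite exchange_big; apply: eq_bigr => qs _; rewrite mulr_sumr.
Qed.

Lemma mom_cycgrad_comm i j a v :
  \sum_(ps <- splits i a) mom ps.1 * mom_cycgrad j ps.2 v + mom_cycgrad i (rcons a j) v =
  \sum_(ps <- splits j a) mom_cycgrad i ps.1 v * mom ps.2 + mom_cycgrad j (i :: a) v.
Proof.
rewrite mom_cycgrad_rcons mom_cycgrad_cons.
rewrite (exchange_big_splits_rot i j (fun x y => mom x * mom (y ++ a))) /=.
rewrite addrA [RHS]addrC; congr (_ + _ + _).
by apply: eq_bigr => ps _; apply: eq_bigr => qs _; rewrite mom_catC mulrC.
Qed.

(* Formally, [dmom v a] is the derivative at eps = 0 of the moment of s_a under
   the free Gibbs law with potential 1/2 sum_j s_j^2 - eps s_v: differentiating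
   its Schwinger-Dyson equation gives the recursion [dmom_cons].  The fuel [k]
   only makes the recursion on the factors of [a] structural. *)
Fixpoint dmom_rec v k a : C :=
  if k is k'.+1 then
    if a is j :: a' then
      \sum_(ps <- splits j a')
        (dmom_rec v k' ps.1 * mom ps.2 + mom ps.1 * dmom_rec v k' ps.2)
      + mom_cycgrad j a' v
    else 0
  else 0.

Definition dmom v a := dmom_rec v (size a) a.

Lemma dmom_rec_cons v k j a :
  dmom_rec v k.+1 (j :: a) =
  \sum_(ps <- splits j a) (dmom_rec v k ps.1 * mom ps.2 + mom ps.1 * dmom_rec v k ps.2)
  + mom_cycgrad j a v.
Proof. by []. Qed.

Lemma dmom_recE v a k : (size a <= k)%N -> dmom_rec v k a = dmom v a.
Proof.
elim/seq_size_ind: a k => -[|j a] IH [|k] // le_ak.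
rewrite /dmom [size _]/= !dmom_rec_cons; congr (_ + _).
apply: eq_big_seq => -[p s] ps_in.
have le_p : (size p <= size a)%N := ltnW (size_splits_l ps_in).
have le_s : (size s <= size a)%N := ltnW (size_splits_r ps_in).
by rewrite /= !(IH p, IH s) // ?(leq_trans le_p le_ak) ?(leq_trans le_s le_ak).
Qed.

Lemma dmom_nil v : dmom v [::] = 0.
Proof. by []. Qed.

Lemma dmom_cons v j a :
  dmom v (j :: a) =
  \sum_(ps <- splits j a) (dmom v ps.1 * mom ps.2 + mom ps.1 * dmom v ps.2)
  + mom_cycgrad j a v.
Proof.
rewrite {1}/dmom /=; congr (_ + _); apply: eq_big_seq => ps ps_in.
by rewrite !dmom_recE // ltnW // (size_splits_l ps_in, size_splits_r ps_in).
Qed.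

Lemma dmom_rcons v a j :
  dmom v (rcons a j) =
  \sum_(ps <- splits j a) (dmom v ps.1 * mom ps.2 + mom ps.1 * dmom v ps.2)
  + mom_cycgrad j a v.
Proof.
elim/seq_size_ind: a => -[|i a] IH; first by rewrite dmom_cons.
have lt_a : (size a < size (i :: a))%N by [].
pose G x y z := dmom v x * mom y * mom z + mom x * dmom v y * mom z + mom x * mom y * dmom v z.
have expand_l ps : ps \in splits i a ->
    dmom v ps.1 * mom (rcons ps.2 j) + mom ps.1 * dmom v (rcons ps.2 j) =
    \sum_(qs <- splits j ps.2) G ps.1 qs.1 qs.2 + mom ps.1 * mom_cycgrad j ps.2 v.
  move=> /size_splits_r lt_ps.
  rewrite mom_rcons (IH _ (ltn_trans lt_ps lt_a)) mulrDr addrA; congr (_ + _).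
  by rewrite !mulr_sumr -big_split; apply: eq_bigr => qs _; rewrite /G /=; ring.
have expand_r ps :
    dmom v (i :: ps.1) * mom ps.2 + mom (i :: ps.1) * dmom v ps.2 =
    \sum_(qs <- splits i ps.1) G qs.1 qs.2 ps.2 + mom_cycgrad i ps.1 v * mom ps.2.
  rewrite dmom_cons mom_cons mulrDl addrAC; congr (_ + _).
  by rewrite !mulr_suml -big_split; apply: eq_bigr => qs _; rewrite /G /=; ring.
rewrite rcons_cons dmom_cons big_splits_rcons big_splits_cons /=.
rewrite (eq_big_seq _ expand_l) (eq_bigr _ (fun ps _ => expand_r ps)).
rewrite !big_split /= exchange_big_splits dmom_nil mom_nil mulr0 mulr1 addr0 mul0r mul1r add0r.
have -> : mom_cycgrad i (rcons a j) v =
    \sum_(ps <- splits j a) mom_cycgrad i ps.1 v * mom ps.2 + mom_cycgrad j (i :: a) v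
    - \sum_(ps <- splits i a) mom ps.1 * mom_cycgrad j ps.2 v.
  by rewrite -(mom_cycgrad_comm i j a v) addrAC subrr add0r.
rewrite eq_sym; ring.
Qed.

Lemma dmom_catC v x y : dmom v (x ++ y) = dmom v (y ++ x).
Proof. by apply: catC_of_rot1 => j a; rewrite dmom_cons dmom_rcons. Qed.

Definition ncfun (L : word n -> C) (p : ncpoly C n) : C := \sum_(t <- p) t.1 * L t.2.

Lemma tauE p : tau p = ncfun mom p.
Proof. by []. Qed.

Lemma ncfun_add L p q : ncfun L (ncadd p q) = ncfun L p + ncfun L q.
Proof. exact: big_cat. Qed.

Lemma ncfun_opp L p : ncfun L (ncopp p) = - ncfun L p.
Proof. by rewrite /ncfun big_map -sumrN; apply: eq_bigr => t _; rewrite mulNr. Qed.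

Lemma ncfun_mul_l L p q :
  ncfun L (ncmul p q) = ncfun (fun a => ncfun (fun b => L (a ++ b)) q) p.
Proof.
rewrite /ncfun big_allpairs_dep; apply: eq_bigr => a _.
by rewrite mulr_sumr; apply: eq_bigr => b _; rewrite mulrA.
Qed.

Lemma ncfun_mul_r L p q :
  ncfun L (ncmul p q) = ncfun (fun b => ncfun (fun a => L (a ++ b)) p) q.
Proof.
rewrite ncfun_mul_l /ncfun.
under eq_bigr => a _ do rewrite mulr_sumr.
rewrite exchange_big; apply: eq_bigr => b _.
by rewrite mulr_sumr; apply: eq_bigr => a _; rewrite mulrCA.
Qed.

Lemma ncfun_mul_oppl L p q : ncfun L (ncmul (ncopp p) q) = - ncfun L (ncmul p q).
Proof. by rewrite !ncfun_mul_l ncfun_opp. Qed.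

Lemma splitsE j w :
  splits j w = [seq (take k w, drop k.+1 w) | k <- iota 0 (size w) & nth j w k == j].
Proof.
elim: w => [|x w IH] //=.
rewrite -[1%N]/(1 + 0)%N iotaDl.
have shift : [seq (take k (x :: w), drop k w) |
    k <- [seq k <- [seq (1 + m)%N | m <- iota 0 (size w)] | nth j (x :: w) k == j]] =
  [seq (x :: ps.1, ps.2) | ps <- splits j w].
  by rewrite filter_map IH -!map_comp.
by case: eqP => _ /=; rewrite shift ?drop0.
Qed.

Lemma cyc_word_splits j w : cyc_word C j w = [seq (1, ps.2 ++ ps.1) | ps <- splits j w].
Proof. by rewrite splitsE -map_comp. Qed.

Lemma ncfun_cycgrad L j r :
  ncfun L (cycgrad j r) = \sum_(t <- r) t.1 * \sum_(ps <- splits j t.2) L (ps.2 ++ ps.1).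
Proof.
rewrite /ncfun /cycgrad big_flatten big_map; apply: eq_bigr => t _.
rewrite big_map cyc_word_splits big_map mulr_sumr.
by apply: eq_bigr => ps _; rewrite /= mulr1.
Qed.

(* The derivation of C^s_<n> sending s_i to s_j and fixing the other generators. *)
Definition ncsubst i j (q : ncpoly C n) : ncpoly C n :=
  [seq (t.1, ps.1 ++ j :: ps.2) | t <- q, ps <- splits i t.2].

Definition ncrot i j (q : ncpoly C n) : ncpoly C n :=
  ncadd (ncsubst i j q) (ncopp (ncsubst j i q)).

(* [p] represents 0 in C^s_<n>. *)
Definition ncnull (p : ncpoly C n) : Prop := forall L, ncfun L p = 0.

Lemma ncfun_subst L i j q :
  ncfun L (ncsubst i j q) =
  \sum_(t <- q) t.1 * \sum_(ps <- splits i t.2) L (ps.1 ++ j :: ps.2).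
Proof. by rewrite /ncfun big_allpairs_dep; under [RHS]eq_bigr do rewrite mulr_sumr. Qed.

Lemma ncfun_subst_mul L i j p q :
  ncfun L (ncsubst i j (ncmul p q)) =
  ncfun (fun a => ncfun (fun b => L (a ++ b)) q) (ncsubst i j p)
  + ncfun (fun b => ncfun (fun a => L (a ++ b)) p) (ncsubst i j q).
Proof.
have subst_l : ncfun (fun a => ncfun (fun b => L (a ++ b)) q) (ncsubst i j p) =
    \sum_(a <- p) \sum_(b <- q) \sum_(ps <- splits i a.2)
      a.1 * b.1 * L (ps.1 ++ j :: ps.2 ++ b.2).
  rewrite ncfun_subst; apply: eq_bigr => a _.
  rewrite /ncfun exchange_big mulr_sumr; apply: eq_bigr => b _.
  by rewrite mulr_sumr; apply: eq_bigr => ps _; rewrite mulrA -catA.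
have subst_r : ncfun (fun b => ncfun (fun a => L (a ++ b)) p) (ncsubst i j q) =
    \sum_(a <- p) \sum_(b <- q) \sum_(ps <- splits i b.2)
      a.1 * b.1 * L ((a.2 ++ ps.1) ++ j :: ps.2).
  rewrite ncfun_subst [RHS]exchange_big; apply: eq_bigr => b _.
  rewrite /ncfun exchange_big mulr_sumr; apply: eq_bigr => a _.
  by rewrite mulr_sumr; apply: eq_bigr => ps _; rewrite mulrCA mulrA catA.
rewrite subst_l subst_r ncfun_subst /ncmul big_allpairs_dep -big_split.
apply: eq_bigr => a _; rewrite -big_split; apply: eq_bigr => b _.
by rewrite /= big_splits_cat mulrDr !mulr_sumr.
Qed.

Lemma ncfun_rot_mul L i j p q :
  ncfun L (ncrot i j (ncmul p q)) =
  ncfun (fun a => ncfun (fun b => L (a ++ b)) q) (ncrot i j p)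
  + ncfun (fun b => ncfun (fun a => L (a ++ b)) p) (ncrot i j q).
Proof. by rewrite /ncrot !ncfun_add !ncfun_opp !ncfun_subst_mul opprD addrACA. Qed.

Lemma ncnull_rot_exp i j x m : ncnull (ncrot i j x) -> ncnull (ncrot i j (ncexp x m)).
Proof.
move=> rot_x; elim: m => [|m IH] L; first by rewrite /ncfun big_nil.
by rewrite [ncexp _ _]/= ncfun_rot_mul rot_x IH addr0.
Qed.

Lemma ncnull_rot_sumsq i j :
  ncnull (ncrot j i (ncadd (ncmul (sgen C i) (sgen C i)) (ncmul (sgen C j) (sgen C j)))).
Proof.
move=> L; rewrite /ncrot ncfun_add ncfun_opp !ncfun_subst /= !big_cons !big_nil /= !eqxx.
by case: eqVneq => [<-|_]; rewrite /= !big_cons !big_nil /=; ring.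
Qed.

Lemma tau_cycgrad_mul i j q r :
  tau (ncmul (cycgrad i q) (cycgrad j r)) =
  \sum_(t <- r) t.1 * \sum_(u <- q) u.1 *
    \sum_(ps <- splits i u.2) mom_cycgrad j (ps.2 ++ ps.1) t.2.
Proof.
rewrite tauE ncfun_mul_r ncfun_cycgrad; apply: eq_bigr => t _; congr (_ * _).
under eq_bigr => ps _ do rewrite ncfun_cycgrad.
rewrite exchange_big; apply: eq_bigr => u _; rewrite -mulr_sumr; congr (_ * _).
by rewrite exchange_big.
Qed.

(* The correction terms of [dmom_cons] cancel by [exchange_big_splits_rot]. *)
Lemma mom_cycgrad_antisym i j w v :
  \sum_(ps <- splits i w) mom_cycgrad j (ps.2 ++ ps.1) v
  - \sum_(ps <- splits j w) mom_cycgrad i (ps.2 ++ ps.1) v =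
  \sum_(ps <- splits i w) dmom v (ps.1 ++ j :: ps.2)
  - \sum_(ps <- splits j w) dmom v (ps.1 ++ i :: ps.2).
Proof.
pose D k a := \sum_(ps <- splits k a) (dmom v ps.1 * mom ps.2 + mom ps.1 * dmom v ps.2).
have cycgrad_dmom k a : mom_cycgrad k a v = dmom v (k :: a) - D k a.
  by rewrite dmom_cons /D addrAC subrr add0r.
under eq_bigr => ps _ do rewrite cycgrad_dmom -cat_cons dmom_catC.
under [X in _ - X]eq_bigr => ps _ do rewrite cycgrad_dmom -cat_cons dmom_catC.
rewrite !sumrB.
have -> : \sum_(ps <- splits i w) D j (ps.2 ++ ps.1) =
           \sum_(ps <- splits j w) D i (ps.2 ++ ps.1).
  rewrite /D (exchange_big_splits_rot i j (fun x y => dmom v x * mom y + mom x * dmom v y)).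
  apply: eq_bigr => ps _; apply: eq_bigr => qs _.
  by rewrite addrC; congr (_ + _); apply: mulrC.
by rewrite opprB addrA addrNK.
Qed.

Lemma tau_cycgrad_antisym i j q r :
  tau (ncmul (cycgrad i q) (cycgrad j r)) - tau (ncmul (cycgrad j q) (cycgrad i r)) =
  ncfun (fun v => ncfun (dmom v) (ncrot i j q)) r.
Proof.
rewrite !tau_cycgrad_mul -sumrB; apply: eq_bigr => t _.
rewrite -mulrBr -sumrB /ncrot ncfun_add ncfun_opp !ncfun_subst -sumrB; congr (_ * _).
by apply: eq_bigr => u _; rewrite -!mulrBr mom_cycgrad_antisym.
Qed.

End Semicircular.

Theorem proposition2p5 (m : nat) : (1 <= m)%N ->
  let s1 := sgen CC idx1 in
  let s2 := sgen CC idx2 in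
  let q := ncexp (ncadd (ncmul s1 s1) (ncmul s2 s2)) m in
  in_Vect (fun j : 'I_2 =>
             if j == idx1 then cycgrad idx2 q else ncopp (cycgrad idx1 q)).
Proof.
move=> _ s1 s2 q r.
have rot_q : ncnull (ncrot idx2 idx1 q) := ncnull_rot_exp m (ncnull_rot_sumsq idx1 idx2).
rewrite big_ord_recl big_ord1 (_ : lift ord0 ord0 = idx2); last exact: val_inj.
rewrite (eqxx idx1) (_ : idx2 == idx1 = false) // !tauE ncfun_mul_oppl -!tauE.
rewrite tau_cycgrad_antisym; apply: big1 => t _.
by rewrite rot_q mulr0.
Qed.
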